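(* Let $\mathbb{K}$ be an algebraically closed field of characteristic zero and let $A,B\in M_3(\mathbb{K})$. Then $$\det\bigl(I,\,A,\,A^2,\,B,\,B^2,\,AB,\,BA,\,[A,[A,B]],\,[B,[B,A]]\bigr)=-9\,\bigl(\det [A,B]\bigr)^2\,H([A,B]).$$ Consequently, if $\det[A,B]\neq 0$ and $H([A,B])\neq 0$, then the nine matrices $I, A, A^2, B, B^2, AB, BA, [A,[A,B]], [B,[B,A]]$ form a basis of $M_3(\mathbb{K})$ as a $\mathbb{K}$-vector space.
   Context: $M_3(\mathbb{K})$ denotes the algebra of $3\times 3$ matrices over $\mathbb{K}$, and $I$ is the $3\times 3$ identity matrix. For $X,Y\in M_3(\mathbb{K})$, $[X,Y]=XY-YX$ is the commutator. For $M\in M_3(\mathbb{K})$, $H(M):=\frac{\operatorname{tr}(M)^2-\operatorname{tr}(M^2)}{2}$. For nine matrices $M_1,\dots,M_9\in M_3(\mathbb{K})$, $\det(M_1,\dots,M_9)$ denotes the determinant of the $9\times 9$ matrix whose $j$-th column is the vector $\bigl((M_j)_{11},(M_j)_{12},(M_j)_{13},(M_j)_{21},(M_j)_{22},(M_j)_{23},(M_j)_{31},(M_j)_{32},(M_j)_{33}\bigr)^T$ of entries of $M_j$ listed in row-major order. *)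

From HB Require Import structures.
From mathcomp Require Import all_boot all_order all_algebra.
Set Implicit Arguments. Unset Strict Implicit. Unset Printing Implicit Defensive.
Import Order.TTheory GRing.Theory.
Local Open Scope ring_scope.

Definition comm3 {K : fieldType} (X Y : 'M[K]_3) : 'M[K]_3 := X *m Y - Y *m X.

Definition H3 {K : fieldType} (M : 'M[K]_3) : K :=
  ((\tr M) ^+ 2 - \tr (M *m M)) / 2%:R.

(* The 9x9 matrix whose j-th column is the row-major vector of entries of
   the j-th matrix in s (index k in 0..8 <-> entry (k/3, k mod 3)). *)
Definition cols9 {K : fieldType} (s : seq 'M[K]_3) : 'M[K]_9 :=
  \matrix_(k < 9, j < 9)
     (nth 0 s j) (inord (k %/ 3)) (inord (k %% 3)).

Definition det9 {K : fieldType} (s : seq 'M[K]_3) : K := \det (cols9 s).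

Definition nine {K : fieldType} (A B : 'M[K]_3) : seq 'M[K]_3 :=
  [:: 1%:M; A; A *m A; B; B *m B; A *m B; B *m A;
      comm3 A (comm3 A B); comm3 B (comm3 B A)].

From HB Require Import structures.
From mathcomp Require Import all_boot all_order all_algebra.
From mathcomp Require Import ring.
Import GRing.Theory.
Local Open Scope ring_scope.
Set Implicit Arguments. Unset Strict Implicit. Unset Printing Implicit Defensive.

(* Clearing the denominator of H, the identity says that
   a polynomial [defect A B] in the entries of A and B vanishes.  The proof:
   - a Laplace expansion [detp] that skips known zero entries turns
     determinants of explicit sparse matrices into polynomials for [ring];
   - [defect] is invariant under simultaneous conjugation: X |-> P X Q acts on
     row-major coordinates by a 9 x 9 matrix of determinant (det P det Q)^3;
   - for diagonal A the 9 x 9 determinant splits into a 3 x 3 and a 6 x 6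
     block and the identity is checked by [ring];
   - a lower triangular A with distinct diagonal entries is conjugate to its
     diagonal; since [defect] commutes with ring morphisms, a density argument
     in one diagonal entry at a time (a polynomial with infinitely many roots
     vanishes) removes the distinctness assumption;
   - over an algebraically closed field every A is conjugate to a lower
     triangular matrix, built from a flag of left eigenvectors. *)

Section Laplace.
Variable R : comNzRingType.

Definition mxf n (f : nat -> nat -> R) : 'M[R]_n := \matrix_(i < n, j < n) f i j.

Lemma mxf_ext n (f g : nat -> nat -> R) :
  (forall i j, (i < n)%N -> (j < n)%N -> f i j = g i j) -> mxf n f = mxf n g.
Proof. by move=> fg; apply/matrixP => i j; rewrite !mxE fg. Qed.

Lemma tr_mxf n (f : nat -> nat -> R) : (mxf n f)^T = mxf n (fun i j => f j i).
Proof. by apply/matrixP => i j; rewrite !mxE. Qed.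

Lemma det_mxfS n (f : nat -> nat -> R) : \det (mxf n.+1 f) =
  \sum_(j < n.+1) f 0%N j * ((-1) ^+ j * \det (mxf n (fun x y => f x.+1 (bump j y)))).
Proof.
rewrite (expand_det_row _ 0); apply: eq_bigr => j _; rewrite mxE /cofactor.
by congr (_ * (_ * \det _)); apply/matrixP => i k; rewrite !mxE.
Qed.

Lemma sum_skip (r : seq nat) (z : nat -> bool) (F G : nat -> R) :
  (forall j, j \in r -> z j -> F j = 0) ->
  (forall j, j \in r -> ~~ z j -> F j = G j) ->
  \sum_(j <- r) F j = foldr (fun j acc => if z j then acc else G j + acc) 0 r.
Proof.
elim: r => [|j r IHr] F0 FG /=; first by rewrite big_nil.
have mem_r k : k \in r -> k \in j :: r by move=> kr; rewrite inE kr orbT.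
rewrite big_cons IHr; last 2 first.
- by move=> k /mem_r; apply: F0.
- by move=> k /mem_r; apply: FG.
case: ifP => zj; first by rewrite F0 ?mem_head ?add0r.
by rewrite FG ?mem_head ?zj.
Qed.

(* Applied to explicit sparse matrices, [simpl] unfolds it into a polynomial. *)
Fixpoint detp (d n : nat) (z : nat -> nat -> bool) (f : nat -> nat -> R) : R :=
  match n, d with
  | 0, _ => 1
  | m.+1, 0 => \det (mxf m.+1 f)
  | m.+1, d'.+1 =>
    foldr (fun j acc => if z 0%N j then acc else
             (if odd j then -1 else 1) * f 0%N j *
             detp d' m (fun x y => z x.+1 (bump j y))
                       (fun x y => f x.+1 (bump j y)) + acc)
          0 (iota 0 m.+1)
  end.

Lemma detpE d n (z : nat -> nat -> bool) (f : nat -> nat -> R) :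
  (forall i j, (i < n)%N -> (j < n)%N -> z i j -> f i j = 0) ->
  \det (mxf n f) = detp d n z f.
Proof.
elim: d n z f => [|d IHd] [|n] z f f0 /=; rewrite ?det_mx00 //.
rewrite det_mxfS -(big_mkord xpredT (fun j => f 0%N j * ((-1) ^+ j *
  \det (mxf n (fun x y => f x.+1 (bump j y)))))) /index_iota subn0.
apply: sum_skip => j; rewrite mem_iota add0n => jn zj; first by rewrite f0 ?mul0r.
rewrite -(IHd n (fun x y => z x.+1 (bump j y))) => [|x y xn yn /f0]; last first.
  by apply=> //; rewrite /bump; case: (j <= y)%N; rewrite /= ?add1n ?add0n // ltnS ltnW.
by rewrite -signr_odd; case: (odd j); rewrite ?expr1 ?expr0; ring.
Qed.
End Laplace.

Section Coordinates.
Variable R : comNzRingType.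

Definition mk33 (a b c d e f g h i : R) : 'M[R]_3 :=
  mxf 3 (fun r s => nth 0 (nth [::] [:: [:: a; b; c]; [:: d; e; f]; [:: g; h; i]] r) s).

Definition e33 (M : 'M[R]_3) (r s : nat) : R := M (inord r) (inord s).

Lemma mx33E (M : 'M[R]_3) : M = mk33 (e33 M 0 0) (e33 M 0 1) (e33 M 0 2)
  (e33 M 1 0) (e33 M 1 1) (e33 M 1 2) (e33 M 2 0) (e33 M 2 1) (e33 M 2 2).
Proof.
apply/matrixP => r s; rewrite !mxE /e33.
by case: r => [[|[|[|]]] ?] //=; case: s => [[|[|[|]]] ?] //=;
  congr (M _ _); apply/val_inj; rewrite /= inordK.
Qed.

Lemma mk33M (a b c d e f g h i a' b' c' d' e' f' g' h' i' : R) :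
  mk33 a b c d e f g h i *m mk33 a' b' c' d' e' f' g' h' i' =
  mk33 (a*a'+b*d'+c*g') (a*b'+b*e'+c*h') (a*c'+b*f'+c*i')
       (d*a'+e*d'+f*g') (d*b'+e*e'+f*h') (d*c'+e*f'+f*i')
       (g*a'+h*d'+i*g') (g*b'+h*e'+i*h') (g*c'+h*f'+i*i').
Proof.
apply/matrixP => r s; rewrite !mxE !big_ord_recl big_ord0 !mxE /=.
by case: r => [[|[|[|]]] ?] //=; case: s => [[|[|[|]]] ?] //=; ring.
Qed.

Lemma mk33B (a b c d e f g h i a' b' c' d' e' f' g' h' i' : R) :
  mk33 a b c d e f g h i - mk33 a' b' c' d' e' f' g' h' i' =
  mk33 (a-a') (b-b') (c-c') (d-d') (e-e') (f-f') (g-g') (h-h') (i-i').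
Proof.
by apply/matrixP => r s; rewrite !mxE; case: r => [[|[|[|]]] ?] //=;
  case: s => [[|[|[|]]] ?].
Qed.

Lemma mk33_1 : (1%:M : 'M[R]_3) = mk33 1 0 0 0 1 0 0 0 1.
Proof.
by apply/matrixP => r s; rewrite !mxE; case: r => [[|[|[|]]] ?] //=;
  case: s => [[|[|[|]]] ?].
Qed.

Lemma det_mk33 (a b c d e f g h i : R) : \det (mk33 a b c d e f g h i) =
  a * (e * i - f * h) - b * (d * i - f * g) + c * (d * h - e * g).
Proof. by rewrite (@detpE _ 3 3 (fun _ _ => false)) //=; ring. Qed.

Lemma tr_mk33 (a b c d e f g h i : R) : \tr (mk33 a b c d e f g h i) = a + e + i.
Proof. by rewrite /mxtrace !big_ord_recl big_ord0 !mxE /=; ring. Qed.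

Definition vec33 (M : 'M[R]_3) : seq R :=
  [:: e33 M 0 0; e33 M 0 1; e33 M 0 2; e33 M 1 0; e33 M 1 1; e33 M 1 2;
      e33 M 2 0; e33 M 2 1; e33 M 2 2].

Lemma vec_mk33 (a b c d e f g h i : R) :
  vec33 (mk33 a b c d e f g h i) = [:: a; b; c; d; e; f; g; h; i].
Proof. by rewrite /vec33 /e33 !mxE !inordK. Qed.

Definition mk13 (a b c : R) : 'rV[R]_3 := \row_(j < 3) nth 0 [:: a; b; c] j.

Lemma rv3E (v : 'rV[R]_3) : v = mk13 (v 0 (inord 0)) (v 0 (inord 1)) (v 0 (inord 2)).
Proof.
apply/matrixP => i j; rewrite !mxE ord1.
by case: j => [[|[|[|]]] ?] //=; congr (v _ _); apply/val_inj; rewrite /= inordK.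
Qed.

Lemma mk13_0 : mk13 0 0 0 = 0.
Proof. by apply/matrixP => i j; rewrite !mxE; case: j => [[|[|[|]]] ?]. Qed.

Lemma mk13M (a b c a00 a01 a02 a10 a11 a12 a20 a21 a22 : R) :
  mk13 a b c *m mk33 a00 a01 a02 a10 a11 a12 a20 a21 a22 =
  mk13 (a * a00 + b * a10 + c * a20) (a * a01 + b * a11 + c * a21)
       (a * a02 + b * a12 + c * a22).
Proof.
apply/matrixP => i j; rewrite !mxE !big_ord_recl big_ord0 !mxE /=.
by case: j => [[|[|[|]]] ?] //=; ring.
Qed.

Lemma mk13Z (k a b c : R) : k *: mk13 a b c = mk13 (k * a) (k * b) (k * c).
Proof. by apply/matrixP => i j; rewrite !mxE; case: j => [[|[|[|]]] ?]. Qed.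

Lemma mk13D (a b c a' b' c' : R) :
  mk13 a b c + mk13 a' b' c' = mk13 (a + a') (b + b') (c + c').
Proof. by apply/matrixP => i j; rewrite !mxE; case: j => [[|[|[|]]] ?]. Qed.

Lemma row0_mk33 (a b c d e f g h i : R) :
  row (inord 0) (mk33 a b c d e f g h i) = mk13 a b c.
Proof. by apply/matrixP => r s; rewrite !mxE inordK //; case: s => [[|[|[|]]] ?]. Qed.

Lemma row1_mk33 (a b c d e f g h i : R) :
  row (inord 1) (mk33 a b c d e f g h i) = mk13 d e f.
Proof. by apply/matrixP => r s; rewrite !mxE inordK //; case: s => [[|[|[|]]] ?]. Qed.

Lemma mx33_row0 (M : 'M[R]_3) (a b c : R) : row (inord 0) M = mk13 a b c ->
  M = mk33 a b c (e33 M 1 0) (e33 M 1 1) (e33 M 1 2) (e33 M 2 0) (e33 M 2 1) (e33 M 2 2).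
Proof.
move=> M0; rewrite {1}(mx33E M); have ent j := congr1 (fun v : 'rV_3 => v 0 (inord j)) M0.
by move: (ent 0%N) (ent 1%N) (ent 2%N); rewrite /e33 /= !mxE !inordK // => -> -> ->.
Qed.

Lemma inord3_eq a b : (a < 3)%N -> (b < 3)%N -> (inord a == inord b :> 'I_3) = (a == b).
Proof. by move=> a3 b3; rewrite -val_eqE /= !inordK. Qed.

Lemma is_trig33P (M : 'M[R]_3) :
  is_trig_mx M <-> [/\ e33 M 0 1 = 0, e33 M 0 2 = 0 & e33 M 1 2 = 0].
Proof.
split=> [/is_trig_mxP M0 | [M01 M02 M12]]; first by split; rewrite /e33 M0 // !inordK.
apply/is_trig_mxP => i j ij; rewrite -(inord_val i) -(inord_val j).
move: ij (ltn_ord j); case: (nat_of_ord i) => [|[|i']]; case: (nat_of_ord j) => [|[|[|j']]] //.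
Qed.
End Coordinates.

Lemma map_mk33 (R S : comNzRingType) (f : {rmorphism R -> S}) (a b c d e g h i j : R) :
  map_mx f (mk33 a b c d e g h i j) =
  mk33 (f a) (f b) (f c) (f d) (f e) (f g) (f h) (f i) (f j).
Proof.
by apply/matrixP => r s; rewrite !mxE; case: r => [[|[|[|]]] ?] //=;
  case: s => [[|[|[|]]] ?] //=; rewrite rmorph0.
Qed.

Section Defect.
Variable R : comNzRingType.

(* The notions [comm3], [cols9] and [nine] over an arbitrary commutative ring,
   as needed for matrices of polynomials; over a field they are the very same
   terms. *)
Definition commR (X Y : 'M[R]_3) : 'M[R]_3 := X *m Y - Y *m X.

Definition coordmx (s : seq 'M[R]_3) : 'M[R]_9 :=
  \matrix_(k < 9, j < 9) (nth 0 s j) (inord (k %/ 3)) (inord (k %% 3)).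

Definition nineR (A B : 'M[R]_3) : seq 'M[R]_3 :=
  [:: 1%:M; A; A *m A; B; B *m B; A *m B; B *m A;
      commR A (commR A B); commR B (commR B A)].

(* The identity to prove, multiplied by 2 so that it makes sense in any ring:
   the theorem states that [defect A B] vanishes. *)
Definition defect (A B : 'M[R]_3) : R :=
  2%:R * \det (coordmx (nineR A B)) +
  9%:R * \det (commR A B) ^+ 2 * (\tr (commR A B) ^+ 2 - \tr (commR A B *m commR A B)).

Lemma coordmx_vec (s : seq 'M[R]_3) : size s = 9%N ->
  coordmx s = mxf 9 (fun k j => nth 0 (nth [::] (map (@vec33 R) s) j) k).
Proof.
move=> s9; apply/matrixP => k j; rewrite !mxE (nth_map 0) ?s9 //.
by rewrite /vec33 /e33; case: k => [[|[|[|[|[|[|[|[|[|]]]]]]]]] ?].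
Qed.

(* If the first three columns of a 9 x 9 matrix vanish outside the rows
   0, 4, 8 (the diagonal entries of a 3 x 3 matrix), its determinant is, up to
   the sign of the block permutation, the 3 x 3 minor on those rows and columns
   times the complementary 6 x 6 minor. *)
Definition offdiag_first3 (k j : nat) : bool := (j < 3)%N && (k \notin [:: 0; 4; 8]%N).

Lemma det9_block (f : nat -> nat -> R) :
  (forall k j, (k < 9)%N -> (j < 9)%N -> offdiag_first3 k j -> f k j = 0) ->
  \det (mxf 9 f) =
  - (\det (mk33 (f 0 0) (f 0 1) (f 0 2) (f 4 0) (f 4 1) (f 4 2) (f 8 0) (f 8 1) (f 8 2))%N *
     \det (mxf 6 (fun i j => f (nth 0 [:: 1; 2; 3; 5; 6; 7] i) j.+3)%N)).
Proof.
move=> f0; move D6E: (\det (mxf 6 _)) => D6.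
have minor6 h : (forall x y, (x < 6)%N -> (y < 6)%N ->
    h x y = f (nth 0%N [:: 1; 2; 3; 5; 6; 7]%N y) x.+3) -> \det (mxf 6 h) = D6.
  move=> hE; rewrite -D6E -det_tr tr_mxf; congr (\det _); apply: mxf_ext => i j i6 j6.
  by rewrite hE.
rewrite -det_tr tr_mxf (@detpE _ 3 9 (fun j k => offdiag_first3 k j)); last first.
  by move=> i j i9 j9 /f0; apply.
rewrite /= !minor6 ?det_mk33; first ring.
all: by move=> x y _; case: y => [|[|[|[|[|[|y]]]]]].
Qed.
End Defect.

Section Diagonal.
Variable R : comNzRingType.

Lemma nine_diag (a0 a1 a2 b00 b01 b02 b10 b11 b12 b20 b21 b22 : R) :
  nineR (mk33 a0 0 0 0 a1 0 0 0 a2) (mk33 b00 b01 b02 b10 b11 b12 b20 b21 b22) =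
  [:: mk33 1 0 0 0 1 0 0 0 1;
      mk33 a0 0 0 0 a1 0 0 0 a2;
      mk33 (a0^+2) 0 0 0 (a1^+2) 0 0 0 (a2^+2);
      mk33 b00 b01 b02 b10 b11 b12 b20 b21 b22;
      mk33 (b00*b00 + b01*b10 + b02*b20) (b00*b01 + b01*b11 + b02*b21)
           (b00*b02 + b01*b12 + b02*b22) (b10*b00 + b11*b10 + b12*b20)
           (b10*b01 + b11*b11 + b12*b21) (b10*b02 + b11*b12 + b12*b22)
           (b20*b00 + b21*b10 + b22*b20) (b20*b01 + b21*b11 + b22*b21)
           (b20*b02 + b21*b12 + b22*b22);
      mk33 (a0*b00) (a0*b01) (a0*b02) (a1*b10) (a1*b11) (a1*b12)
           (a2*b20) (a2*b21) (a2*b22);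
      mk33 (a0*b00) (a1*b01) (a2*b02) (a0*b10) (a1*b11) (a2*b12)
           (a0*b20) (a1*b21) (a2*b22);
      mk33 ((a0-a0)^+2*b00) ((a0-a1)^+2*b01) ((a0-a2)^+2*b02)
           ((a1-a0)^+2*b10) ((a1-a1)^+2*b11) ((a1-a2)^+2*b12)
           ((a2-a0)^+2*b20) ((a2-a1)^+2*b21) ((a2-a2)^+2*b22);
      mk33 (b00*b00*(a0+a0-2%:R*a0) + b01*b10*(a0+a0-2%:R*a1) + b02*b20*(a0+a0-2%:R*a2))
           (b00*b01*(a0+a1-2%:R*a0) + b01*b11*(a0+a1-2%:R*a1) + b02*b21*(a0+a1-2%:R*a2))
           (b00*b02*(a0+a2-2%:R*a0) + b01*b12*(a0+a2-2%:R*a1) + b02*b22*(a0+a2-2%:R*a2))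
           (b10*b00*(a1+a0-2%:R*a0) + b11*b10*(a1+a0-2%:R*a1) + b12*b20*(a1+a0-2%:R*a2))
           (b10*b01*(a1+a1-2%:R*a0) + b11*b11*(a1+a1-2%:R*a1) + b12*b21*(a1+a1-2%:R*a2))
           (b10*b02*(a1+a2-2%:R*a0) + b11*b12*(a1+a2-2%:R*a1) + b12*b22*(a1+a2-2%:R*a2))
           (b20*b00*(a2+a0-2%:R*a0) + b21*b10*(a2+a0-2%:R*a1) + b22*b20*(a2+a0-2%:R*a2))
           (b20*b01*(a2+a1-2%:R*a0) + b21*b11*(a2+a1-2%:R*a1) + b22*b21*(a2+a1-2%:R*a2))
           (b20*b02*(a2+a2-2%:R*a0) + b21*b12*(a2+a2-2%:R*a1) + b22*b22*(a2+a2-2%:R*a2))].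
Proof.
rewrite /nineR /commR mk33_1 !(mk33M, mk33B).
by congr [:: _; _; _; _; _; _; _; _; _]; congr mk33; ring.
Qed.

Lemma defect_diag (a0 a1 a2 b00 b01 b02 b10 b11 b12 b20 b21 b22 : R) :
  defect (mk33 a0 0 0 0 a1 0 0 0 a2) (mk33 b00 b01 b02 b10 b11 b12 b20 b21 b22) = 0.
Proof.
rewrite /defect nine_diag /commR !(mk33M, mk33B) !det_mk33 !tr_mk33.
rewrite coordmx_vec // [map _ _]/= !vec_mk33 det9_block; last first.
  move=> k j k9 j9.
  by case: k k9 => [|[|[|[|[|[|[|[|[|k]]]]]]]]] //;
     case: j j9 => [|[|[|[|[|[|[|[|[|j]]]]]]]]].
by rewrite (@detpE _ 6 6 (fun _ _ => false)) //= det_mk33; ring.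
Qed.
End Diagonal.

Section Multiplication.
Variable R : comNzRingType.

(* The 9 x 9 matrices of the linear maps X |-> P X and X |-> X Q in the
   row-major coordinates of 'M_3 (Kronecker products with the identity). *)
Definition lmulmx (P : 'M[R]_3) : 'M[R]_9 :=
  mxf 9 (fun k k' => if (k %% 3 == k' %% 3)%N then e33 P (k %/ 3) (k' %/ 3) else 0).

Definition rmulmx (Q : 'M[R]_3) : 'M[R]_9 :=
  mxf 9 (fun k k' => if (k %/ 3 == k' %/ 3)%N then e33 Q (k' %% 3) (k %% 3) else 0).

Lemma nth_map0 (g : 'M[R]_3 -> 'M[R]_3) (s : seq 'M[R]_3) j : g 0 = 0 ->
  nth 0 (map g s) j = g (nth 0 s j).
Proof.
move=> g0; case: (ltnP j (size s)) => js; first by rewrite (nth_map 0).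
by rewrite !nth_default ?size_map.
Qed.

Lemma coordmx_mull (P : 'M[R]_3) s : coordmx (map (mulmx P) s) = lmulmx P *m coordmx s.
Proof.
apply/matrixP => k j; rewrite mxE nth_map0 ?mulmx0 //.
rewrite {1}(mx33E (nth 0 s j)) {1}(mx33E P) mk33M !mxE !big_ord_recl big_ord0 !mxE /e33.
by case: k => [[|[|[|[|[|[|[|[|[|k]]]]]]]]] ?] //=; rewrite /mk33 /mxf ?mxE ?inordK //=; ring.
Qed.

Lemma coordmx_mulr (Q : 'M[R]_3) s : coordmx (map (mulmx^~ Q) s) = rmulmx Q *m coordmx s.
Proof.
apply/matrixP => k j; rewrite mxE nth_map0 ?mul0mx //.
rewrite {1}(mx33E (nth 0 s j)) {1}(mx33E Q) mk33M !mxE !big_ord_recl big_ord0 !mxE /e33.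
by case: k => [[|[|[|[|[|[|[|[|[|k]]]]]]]]] ?] //=; rewrite /mk33 /mxf ?mxE ?inordK //=; ring.
Qed.

Lemma det_lmulmx (P : 'M[R]_3) : \det (lmulmx P) = \det P ^+ 3.
Proof.
rewrite (@detpE _ 9 9 (fun k k' => k %% 3 != k' %% 3)%N) => [|i j _ _ /negbTE ->] //.
by rewrite [in RHS](mx33E P) det_mk33 /=; ring.
Qed.

Lemma det_rmulmx (Q : 'M[R]_3) : \det (rmulmx Q) = \det Q ^+ 3.
Proof.
rewrite (@detpE _ 9 9 (fun k k' => k %/ 3 != k' %/ 3)%N) => [|i j _ _ /negbTE ->] //.
by rewrite [in RHS](mx33E Q) det_mk33 /=; ring.
Qed.
End Multiplication.

Section Conjugation.
Variables (R : comNzRingType) (P Q : 'M[R]_3).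
Hypothesis PQ : P *m Q = 1%:M.

Let QP : Q *m P = 1%:M := mulmx1C PQ.
Let cj (X : 'M[R]_3) := P *m X *m Q.

Lemma cjM X Y : cj X *m cj Y = cj (X *m Y).
Proof. by rewrite /cj !mulmxA -(mulmxA _ Q P) QP mulmx1. Qed.

Lemma cj_comm X Y : commR (cj X) (cj Y) = cj (commR X Y).
Proof. by rewrite /commR !cjM /cj mulmxBr mulmxBl. Qed.

Lemma nine_cj A B : nineR (cj A) (cj B) = map cj (nineR A B).
Proof. by rewrite /nineR /= !cj_comm !cjM /cj mulmx1 PQ. Qed.

Lemma det_cj X : \det (cj X) = \det X.
Proof. by rewrite /cj !det_mulmx mulrC mulrA -det_mulmx QP det1 mul1r. Qed.

Lemma tr_cj X : \tr (cj X) = \tr X.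
Proof. by rewrite /cj mxtrace_mulC mulmxA QP mul1mx. Qed.

(* det9 is invariant since det (lmulmx P) det (rmulmx Q) = (det P det Q)^3 = 1. *)
Lemma det_coordmx_cj s : \det (coordmx (map cj s)) = \det (coordmx s).
Proof.
have -> : map cj s = map (mulmx P) (map (mulmx^~ Q) s).
  by rewrite -map_comp; apply: eq_map => X /=; rewrite /cj mulmxA.
rewrite coordmx_mull coordmx_mulr !det_mulmx det_lmulmx det_rmulmx mulrA.
by rewrite -exprMn -det_mulmx PQ det1 expr1n mul1r.
Qed.

Lemma defect_cj A B : defect (cj A) (cj B) = defect A B.
Proof. by rewrite /defect nine_cj det_coordmx_cj cj_comm det_cj tr_cj cjM tr_cj. Qed.
End Conjugation.

Section Morphism.
Variables (R S : comNzRingType) (f : {rmorphism R -> S}).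

Lemma map_coordmx (s : seq 'M[R]_3) :
  map_mx f (coordmx s) = coordmx (map (map_mx f) s).
Proof.
apply/matrixP => k j; rewrite !mxE.
case: (ltnP j (size s)) => js; first by rewrite (nth_map 0) // mxE.
by rewrite !nth_default ?size_map // !mxE rmorph0.
Qed.

Lemma map_commR (X Y : 'M[R]_3) :
  map_mx f (commR X Y) = commR (map_mx f X) (map_mx f Y).
Proof. by rewrite /commR map_mxB !map_mxM. Qed.

Lemma defect_map (A B : 'M[R]_3) : f (defect A B) = defect (map_mx f A) (map_mx f B).
Proof.
rewrite /defect rmorphD !rmorphM /= rmorphB /= !rmorphXn -!det_map_mx -!trace_map_mx.
rewrite map_coordmx !map_mxM map_commR !rmorph_nat.
by rewrite /nineR /= map_mx1 !map_mxM !map_commR.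
Qed.
End Morphism.

Section Density.
Variable K : fieldType.
Hypothesis K0 : [pchar K] =i pred0.

Lemma natr_inj : injective (fun n : nat => n%:R : K).
Proof.
have natr_eq0 := (pcharf0P K).1 K0.
suff le_inj m n : (m <= n)%N -> m%:R = n%:R :> K -> m = n.
  move=> m n /= mn; case: (leqP m n) => [le_mn|/ltnW le_nm]; first exact: le_inj.
  by rewrite (le_inj _ _ le_nm).
move=> le_mn mn; apply/eqP; rewrite eqn_leq le_mn /= -subn_eq0 -natr_eq0.
by rewrite natrB // mn subrr.
Qed.

(* In characteristic 0 a polynomial vanishing outside a finite set is zero:
   it has more roots among 0, 1, 2, ... than its degree. *)
Lemma poly_eq0_cofinite (p : {poly K}) (S : seq K) :
  (forall c, c \notin S -> p.[c] = 0) -> p = 0.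
Proof.
move=> p0.
pose l := map (fun i : nat => i%:R : K) (iota 0 (size p + size S)).
have ul : uniq l by rewrite map_inj_uniq ?iota_uniq //; exact: natr_inj.
apply: (@roots_geq_poly_eq0 _ p [seq x <- l | x \notin S]).
- by apply/allP => x; rewrite mem_filter => /andP [xS _]; rewrite /root p0.
- exact: filter_uniq.
have inS_le : (count (mem S) l <= size S)%N.
  rewrite -size_filter; apply: uniq_leq_size; first exact: filter_uniq.
  by move=> x; rewrite mem_filter => /andP [].
have := count_predC (mem S) l; rewrite size_filter size_map size_iota.
by move=> lE; rewrite -(leq_add2l (count (mem S) l)) lE addnC leq_add2l.
Qed.

Lemma defect_density (M : 'M[{poly K}]_3) (B : 'M[K]_3) (S : seq K) :
  (forall c, c \notin S -> defect (map_mx (horner_eval c) M) B = 0) ->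
  forall c, defect (map_mx (horner_eval c) M) B = 0.
Proof.
have evalE c : defect (map_mx (horner_eval c) M) B = (defect M (map_mx polyC B)).[c].
  rewrite -horner_evalE defect_map; congr (defect _ _).
  by apply/matrixP => i j; rewrite !mxE /= horner_evalE hornerC.
move=> M0 c; rewrite evalE.
suff -> : defect M (map_mx polyC B) = 0 by rewrite horner0.
by apply: (poly_eq0_cofinite (S := S)) => c' /M0; rewrite evalE.
Qed.
End Density.

Section Lower.
Variable K : fieldType.

(* A lower triangular matrix with distinct diagonal entries is conjugate to
   its diagonal by a unipotent lower triangular matrix. *)
Lemma defect_lower_distinct (a x p y z q : K) (B : 'M[K]_3) :
  a != p -> p != q -> a != q -> defect (mk33 a 0 0 x p 0 y z q) B = 0.
Proof.
rewrite -(subr_eq0 a p) -(subr_eq0 p q) -(subr_eq0 a q) => ap pq aq.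
have [u ->] : exists u, x = u * (a - p) by exists (x / (a - p)); rewrite divfK.
have [w ->] : exists w, z = w * (p - q) by exists (z / (p - q)); rewrite divfK.
have [v ->] : exists v, y = v * (a - q) - w * (p - q) * u.
  by exists ((y + w * (p - q) * u) / (a - q)); rewrite divfK // addrK.
pose U := mk33 1 0 0 u 1 0 v w 1.
pose Ui := mk33 1 0 0 (- u) 1 0 (u * w - v) (- w) 1.
have UiU : Ui *m U = 1%:M by rewrite mk33M mk33_1; congr mk33; ring.
rewrite -(defect_cj UiU).
have -> : Ui *m mk33 a 0 0 (u * (a - p)) p 0 (v * (a - q) - w * (p - q) * u)
    (w * (p - q)) q *m U = mk33 a 0 0 0 p 0 0 0 q.
  by rewrite !mk33M; congr mk33; ring.
by rewrite (mx33E (Ui *m B *m U)) defect_diag.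
Qed.

Hypothesis K0 : [pchar K] =i pred0.

(* Distinctness is removed by density: first in the middle diagonal entry
   (while the last one differs from the first), then in the last one. *)
Lemma defect_lower (a x p y z q : K) (B : 'M[K]_3) :
  defect (mk33 a 0 0 x p 0 y z q) B = 0.
Proof.
have eval_mid (a0 x0 y0 z0 q0 c : K) : mk33 a0 0 0 x0 c 0 y0 z0 q0 =
    map_mx (horner_eval c) (mk33 a0%:P 0 0 x0%:P 'X 0 y0%:P z0%:P q0%:P).
  by rewrite map_mk33 /= !horner_evalE !hornerC hornerX ?rmorph0.
have eval_last (a0 x0 p0 y0 z0 c : K) : mk33 a0 0 0 x0 p0 0 y0 z0 c =
    map_mx (horner_eval c) (mk33 a0%:P 0 0 x0%:P p0%:P 0 y0%:P z0%:P 'X).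
  by rewrite map_mk33 /= !horner_evalE !hornerC hornerX ?rmorph0.
have q_ne_a q' : q' != a -> forall p', defect (mk33 a 0 0 x p' 0 y z q') B = 0.
  move=> q'a p'; rewrite (eval_mid _ _ _ _ _ p').
  apply: (defect_density K0 (S := [:: a; q'])) => c.
  rewrite !inE negb_or => /andP [ca cq].
  by rewrite -(eval_mid _ _ _ _ _ c) defect_lower_distinct // 1?eq_sym // eq_sym.
rewrite eval_last; apply: (defect_density K0 (S := [:: a])) => c; rewrite inE => ca.
by rewrite -eval_last q_ne_a.
Qed.

Lemma defect_trig (A B : 'M[K]_3) : is_trig_mx A -> defect A B = 0.
Proof. by case/is_trig33P=> A01 A02 A12; rewrite (mx33E A) A01 A02 A12 defect_lower. Qed.
End Lower.

Section Flags.
Variable F : fieldType.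

Lemma unitmx_det n (P : 'M[F]_n) (d : F) : \det P = d -> d != 0 -> P \in unitmx.
Proof. by move=> <- d0; rewrite unitmxE unitfE. Qed.

Lemma conj_row n (P A : 'M[F]_n) (i : 'I_n) (c : 'rV_n) :
  P \in unitmx -> row i P *m A = c *m P -> row i (P *m A *m invmx P) = c.
Proof. by move=> Pu cP; rewrite !row_mul cP mulmxK. Qed.

Lemma flag_trig (P A : 'M[F]_3) (l s m : F) :
  P \in unitmx -> row (inord 0) P *m A = l *: row (inord 0) P ->
  row (inord 1) P *m A = s *: row (inord 0) P + m *: row (inord 1) P ->
  is_trig_mx (P *m A *m invmx P).
Proof.
move=> Pu r0 r1; have rowP k : row k P = row k 1%:M *m P by rewrite -row_mul mul1mx.
have E0 : row (inord 0) (P *m A *m invmx P) = l *: row (inord 0) 1%:M.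
  by apply: conj_row; rewrite // r0 -scalemxAl -rowP.
have E1 : row (inord 1) (P *m A *m invmx P) =
    s *: row (inord 0) 1%:M + m *: row (inord 1) 1%:M.
  by apply: conj_row; rewrite // r1 mulmxDl -!scalemxAl -!rowP.
have ent i j : (P *m A *m invmx P) i j = row i (P *m A *m invmx P) 0 j.
  by rewrite [RHS]mxE.
apply/is_trig33P; rewrite /e33 !ent E0 E1 !mxE !inord3_eq //=.
by rewrite !mulr0 addr0.
Qed.
End Flags.

Section Trigonalization.
Variable K : closedFieldType.

Lemma left_eigenvector n (A : 'M[K]_n.+1) :
  exists l (v : 'rV_n.+1), v != 0 /\ v *m A = l *: v.
Proof.
have [l] : exists l, root (char_poly A) l by apply/closed_rootP; rewrite size_char_poly.
by rewrite -eigenvalue_root_char => /eigenvalueP [v vA vn0]; exists l, v.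
Qed.

Lemma complete_row (v : 'rV[K]_3) : v != 0 ->
  exists2 P : 'M_3, P \in unitmx & row (inord 0) P = v.
Proof.
rewrite [v]rv3E; move: (v 0 (inord 0)) (v 0 (inord 1)) (v 0 (inord 2)) => v0 v1 v2 vn0.
have [v0n|v00] := eqVneq v0 0.
  have [v1n|v10] := eqVneq v1 0.
    have [v2n|v20] := eqVneq v2 0; first by rewrite v0n v1n v2n mk13_0 eqxx in vn0.
    exists (mk33 0 0 v2 1 0 0 0 1 0); last by rewrite row0_mk33 v0n v1n.
    by apply: (unitmx_det (d := v2)) => //; rewrite det_mk33; ring.
  exists (mk33 0 v1 v2 1 0 0 0 0 1); last by rewrite row0_mk33 v0n.
  by apply: (unitmx_det (d := - v1)); rewrite ?oppr_eq0 // det_mk33; ring.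
exists (mk33 v0 v1 v2 0 1 0 0 0 1); last exact: row0_mk33.
by apply: (unitmx_det (d := v0)) => //; rewrite det_mk33; ring.
Qed.

(* A matrix with first row (l, 0, 0) has a flag: the row (0, w1, w2) with
   (w1, w2) a left eigenvector of the lower right 2 x 2 block. *)
Lemma trig_block (A : 'M[K]_3) (l : K) : row (inord 0) A = mk13 l 0 0 ->
  exists2 P : 'M_3, P \in unitmx & is_trig_mx (P *m A *m invmx P).
Proof.
move/mx33_row0 => ->; move: (e33 A 1 0) (e33 A 1 1) (e33 A 1 2) (e33 A 2 0)
  (e33 A 2 1) (e33 A 2 2) => b c d e f g.
have [d0|dn0] := eqVneq d 0.
  exists 1%:M; first exact: unitmx1.
  apply: (flag_trig (l := l) (s := b) (m := c)); first exact: unitmx1.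
    by rewrite mk33_1 row0_mk33 mk13M mk13Z; congr mk13; ring.
  by rewrite mk33_1 row0_mk33 row1_mk33 mk13M !mk13Z mk13D d0; congr mk13; ring.
have [mu] : exists mu, root (('X - c%:P) * ('X - g%:P) - (d * f)%:P) mu.
  apply/closed_rootP; rewrite size_addl size_mul ?polyXsubC_eq0 ?size_XsubC //.
  by rewrite size_opp size_polyC; case: (_ != 0).
rewrite /root !hornerE => /eqP mu_root.
have mu_eq : mu * (mu - g) = (mu - g) * c + d * f.
  by apply/eqP; rewrite -subr_eq0 -mu_root; apply/eqP; ring.
pose P := mk33 1 0 0 0 (mu - g) d 0 1 0.
have Pu : P \in unitmx.
  by apply: (unitmx_det (d := - d)); rewrite ?oppr_eq0 // det_mk33; ring.
exists P => //; apply: (flag_trig (l := l) (s := (mu - g) * b + d * e) (m := mu)) => //.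
  by rewrite row0_mk33 mk13M mk13Z; congr mk13; ring.
rewrite row0_mk33 row1_mk33 mk13M !mk13Z mk13D; congr mk13; [ring | | ring].
by rewrite mu_eq; ring.
Qed.

Lemma trigonalize (A : 'M[K]_3) :
  exists P Q : 'M[K]_3, P *m Q = 1%:M /\ is_trig_mx (P *m A *m Q).
Proof.
have [l [v [vn vA]]] := left_eigenvector A.
have [P1 P1u P1v] := complete_row vn.
have A1row : row (inord 0) (P1 *m A *m invmx P1) = mk13 l 0 0.
  apply: conj_row => //; rewrite P1v vA -P1v.
  have -> : mk13 l 0 0 = l *: row (inord 0) 1%:M.
    by rewrite mk33_1 row0_mk33 mk13Z; congr mk13; ring.
  by rewrite -scalemxAl -row_mul mul1mx.
have [P2 P2u P2trig] := trig_block A1row.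
exists (P2 *m P1), (invmx P1 *m invmx P2); split.
  by rewrite mulmxA -(mulmxA P2) mulmxV // mulmx1 mulmxV.
by rewrite !mulmxA in P2trig *.
Qed.
End Trigonalization.

Lemma defect_eq0 (K : closedFieldType) (K0 : [pchar K] =i pred0) (A B : 'M[K]_3) :
  defect A B = 0.
Proof.
have [P [Q [PQ trigA]]] := trigonalize A.
by rewrite -(defect_cj PQ) (defect_trig K0).
Qed.

Lemma det9_basis (K : fieldType) (s : 9.-tuple 'M[K]_3) :
  det9 s != 0 -> basis_of fullv s.
Proof.
move=> s_det; rewrite basisEfree subvf dimvf dim_matrix size_tuple andbT.
apply/freeP => k ks0.
have Mu : cols9 s \in unitmx by rewrite unitmxE unitfE.
have Mk : cols9 s *m \col_i k i = 0.
  apply/matrixP => r c; rewrite !mxE.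
  have := congr1 (fun X : 'M[K]_3 => X (inord (r %/ 3)) (inord (r %% 3))) ks0.
  rewrite /= summxE mxE => E; apply: (etrans _ E).
  by apply: eq_bigr => j _; rewrite !mxE mulrC.
have kc0 : \col_i k i = 0 by rewrite -(mulKmx Mu (\col_i k i)) Mk mulmx0.
by move=> i; have := congr1 (fun v : 'cV_9 => v i 0) kc0; rewrite !mxE.
Qed.

Theorem theorem7 (K : closedFieldType) (hK : [pchar K] =i pred0)
  (A B : 'M[K]_3) :
  det9 (nine A B) = - 9%:R * (\det (comm3 A B)) ^+ 2 * H3 (comm3 A B)
  /\ (\det (comm3 A B) != 0 -> H3 (comm3 A B) != 0 ->
      basis_of fullv (nine A B)).
Proof.
have natf0 := (pcharf0P K).1 hK.
have two0 : (2%:R : K) != 0 by rewrite natf0.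
have identity : det9 (nine A B) = - 9%:R * (\det (comm3 A B)) ^+ 2 * H3 (comm3 A B).
  apply: (mulfI two0); move/eqP: (defect_eq0 hK A B); rewrite addr_eq0 => /eqP ->.
  by rewrite /H3; field.
split=> // C_det C_H; apply: (@det9_basis K (in_tuple (nine A B))).
by rewrite -[det9 _]/(det9 (nine A B)) identity mulf_neq0 // mulf_neq0 ?expf_neq0 // oppr_eq0 natf0.
Qed.
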